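(* Let $H$ and $K$ be $2$-connected cubic graphs. If $\pi(H)=4$ and $K$ is $3$-edge-colourable, then $\pi(H\oplus_2 K)=4$ and $\pi(H\oplus_3 K)=4$ for any choice of distinguished edges or vertices.
   Context: Graphs are finite; loops and multiple edges are allowed. For a bridgeless cubic graph $G$, the perfect matching index $\pi(G)$ is the smallest number of perfect matchings of $G$ whose union is $E(G)$. A $2$-sum $H\oplus_2 K$ of $2$-connected cubic graphs $H,K$ with distinguished edges $e\in E(H)$, $f\in E(K)$ is obtained by deleting $e$ and $f$ and joining the two $2$-valent vertices of $H-e$ to the two $2$-valent vertices of $K-f$ by two new independent edges. A $3$-sum $H\oplus_3 K$ with distinguished vertices $u\in V(H)$, $v\in V(K)$ is obtained by deleting $u$ and $v$ and joining the three dangling edge-ends formerly incident with $u$ bijectively to the three dangling edge-ends formerly incident with $v$, forming three new edges. *)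

From mathcomp Require Import all_boot.
Set Implicit Arguments. Unset Strict Implicit. Unset Printing Implicit Defensive.

(* A finite graph: a finite vertex type, a finite edge type, and for each edge
   its two ends [ends e false] and [ends e true]; a loop has equal ends,
   parallel edges are distinct edges with the same ends. A pair (e, b) is a
   dart (edge-end) of e; it is incident with the vertex [ends e b]. *)
Record graph := Graph {
  gV : finType;
  gE : finType;
  ends : gE -> bool -> gV
}.

Section GraphDefs.
Variable G : graph.

(* darts at x; a loop at x contributes two darts *)
Definition darts_at (x : gV G) : {set gE G * bool} :=
  [set d : gE G * bool | ends d.1 d.2 == x].

Definition cubic : Prop := forall x : gV G, #|darts_at x| = 3.

Definition adj : rel (gV G) :=
  fun x y => [exists e : gE G, exists b : bool,
                (ends e b == x) && (ends e (~~ b) == y)].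

Definition connected : Prop := forall x y : gV G, connect adj x y.

Definition adj_minus (w : gV G) : rel (gV G) :=
  fun x y => [&& x != w, y != w & adj x y].

Definition two_connected : Prop :=
  [/\ 2 <= #|gV G|, connected &
      forall w x y : gV G, x != w -> y != w -> connect (adj_minus w) x y].

(* a perfect matching: every vertex is incident with exactly one edge-end of
   an edge of M (so loops never belong to M) *)
Definition perfect_matching (M : {set gE G}) : Prop :=
  forall x : gV G, #|[set d in darts_at x | d.1 \in M]| = 1.

Definition pm_cover (k : nat) : Prop :=
  exists Ms : 'I_k -> {set gE G},
    (forall i, perfect_matching (Ms i)) /\ (forall e : gE G, exists i, e \in Ms i).

Definition pm_index (n : nat) : Prop :=
  pm_cover n /\ forall m, m < n -> ~ pm_cover m.

(* proper 3-edge-colouring: two distinct darts at the same vertex get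
   distinct colours (a loop thus forbids colourability) *)
Definition three_edge_colourable : Prop :=
  exists c : gE G -> 'I_3, forall d1 d2 : gE G * bool,
    d1 != d2 -> ends d1.1 d1.2 = ends d2.1 d2.2 -> c d1.1 != c d2.1.

End GraphDefs.

Section TwoSum.
Variables (H K : graph) (e : gE H) (f : gE K) (s : bool).

Definition sum2_E : finType := ({x : gE H | x != e} + {y : gE K | y != f} + bool)%type.

(* new edge b joins ends e b with ends f (b (+) s); [s] selects one of the
   two possible ways of joining *)
Definition sum2_ends (g : sum2_E) (b : bool) : (gV H + gV K)%type :=
  match g with
  | inl (inl x) => inl (ends (val x) b)
  | inl (inr y) => inr (ends (val y) b)
  | inr c => if b then inr (ends f (addb c s)) else inl (ends e c)
  end.

Definition sum2 : graph := @Graph (gV H + gV K)%type sum2_E sum2_ends.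
End TwoSum.

Section ThreeSum.
Variables (H K : graph) (u : gV H) (v : gV K).

Definition dangling (G : graph) (w : gV G) : pred (gE G * bool) :=
  fun d => (ends d.1 d.2 == w) && (ends d.1 (~~ d.2) != w).

Definition Dang (G : graph) (w : gV G) : finType := {d : gE G * bool | dangling w d}.

Definition avoid (G : graph) (w : gV G) : pred (gE G) :=
  fun x => (ends x false != w) && (ends x true != w).

Definition Vm (G : graph) (w : gV G) : finType := {x : gV G | x != w}.

Lemma avoid_end (G : graph) (w : gV G) (x : {x : gE G | avoid w x}) (b : bool) :
  ends (val x) b != w.
Proof. by case: x => x /= /andP[h1 h2]; case: b. Qed.

Lemma dang_end (G : graph) (w : gV G) (d : Dang w) :
  ends (val d).1 (~~ (val d).2) != w.
Proof. by case: d => d /= /andP[]. Qed.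

Definition old_end (G : graph) (w : gV G) (x : {x : gE G | avoid w x}) (b : bool)
  : Vm w := exist _ (ends (val x) b) (avoid_end x b).

Definition far_end (G : graph) (w : gV G) (d : Dang w) : Vm w :=
  exist _ (ends (val d).1 (~~ (val d).2)) (dang_end d).

Variable phi : Dang u -> Dang v.

Definition sum3_E : finType :=
  ({x : gE H | avoid u x} + {y : gE K | avoid v y} + Dang u)%type.

(* the new edge indexed by a dangling end d at u joins the far end of d with
   the far end of phi d *)
Definition sum3_ends (g : sum3_E) (b : bool) : (Vm u + Vm v)%type :=
  match g with
  | inl (inl x) => inl (old_end x b)
  | inl (inr y) => inr (old_end y b)
  | inr d => if b then inr (far_end (phi d)) else inl (far_end d)
  end.

Definition sum3 : graph := @Graph (Vm u + Vm v)%type sum3_E sum3_ends.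
End ThreeSum.

(* K, being cubic and 3-edge-colourable, has an even number of vertices, so by
   parity a perfect matching of a 2-sum uses both or none of the two new edges,
   and one of a 3-sum uses an odd number of the three new edges.  Such a matching
   restricts to a perfect matching of H, for the 3-sum provided it uses exactly
   one new edge.  When a 3-sum is covered by three perfect matchings, every new
   edge lies in exactly one of them (its ends have degree 3), so each uses exactly
   one new edge.  Hence a cover of the sum by fewer than four perfect matchings
   gives one of H. *)

From mathcomp Require Import all_boot.
Set Implicit Arguments. Unset Strict Implicit. Unset Printing Implicit Defensive.

Lemma leq_sum_eq (I : finType) (P : pred I) (a n : I -> nat) :
  (forall i, P i -> a i <= n i) -> \sum_(i | P i) n i <= \sum_(i | P i) a i ->
  forall i, P i -> n i = a i.
Proof.
move=> le_an le_sum i Pi; apply/esym/eqP; move: i Pi; apply/forall_inP.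
have [_ <-] := leqif_sum (fun j Pj => leqif_eq (le_an j Pj)).
by rewrite eqn_leq le_sum leq_sum.
Qed.

Lemma big_sig_cond (T : finType) (P Q : pred T) (F : T -> nat) :
  \sum_(x | Q x && P x) F x = \sum_(y : {x | P x} | Q (val y)) F (val y).
Proof. by rewrite -big_sub_cond; apply: eq_bigl => x; rewrite andbC. Qed.

Lemma big_sig (T : finType) (P : pred T) (F : T -> nat) :
  \sum_(x | P x) F x = \sum_(y : {x | P x}) F (val y).
Proof. exact: (big_sig_cond P xpredT). Qed.

Lemma sum_eq_in (T : finType) (S : {set T}) a : \sum_(x in S) (a == x) = (a \in S).
Proof.
rewrite big_mkcond (bigD1 a) //= eqxx big1 => [|x /negbTE]; first by case: (a \in S).
by rewrite eq_sym => ->; case: (x \in S).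
Qed.

Lemma card_right_vertices (A B : finType) :
  #|[set x : A + B | if x is inr _ then true else false]| = #|B|.
Proof.
rewrite -sum1_card big_sumType /= big_pred0 => [|a]; last by rewrite inE.
by rewrite add0n -[RHS]sum1_card; apply: eq_bigl => b; rewrite inE.
Qed.

Lemma ord3_others (c0 : 'I_3) :
  exists c1 c2 : 'I_3, [/\ c1 != c0, c2 != c0 & forall c, [|| c == c0, c == c1 | c == c2]].
Proof.
pose o (n : nat) (lt_n3 : n < 3) : 'I_3 := Ordinal lt_n3.
by case: c0 => -[|[|[|//]]] ?; [exists (o 1 isT), (o 2 isT) | exists (o 0 isT), (o 2 isT)
  | exists (o 0 isT), (o 1 isT)]; split => // -[[|[|[|//]]] ?].
Qed.

Section Matchings.
Variable G : graph.
Implicit Types (M : {set gE G}) (x w : gV G) (g : gE G).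

Definition incid g x : nat := (ends g false == x) + (ends g true == x).

Definition loopless : Prop := forall g, ends g false != ends g true.

Lemma card_matched_darts M x :
  #|[set d in darts_at x | d.1 \in M]| = \sum_(g in M) incid g x.
Proof.
rewrite -sum1dep_card.
under [RHS]eq_bigr => g _ do
  rewrite /incid addnC -(big_bool _ (fun b => (ends g b == x) : nat)).
rewrite pair_big_dep [LHS]big_mkcond [RHS]big_mkcond /=; apply: eq_bigr => -[g b] _.
by rewrite !inE andbT; case: (g \in M); case: eqP.
Qed.

Lemma card_darts_at x : #|darts_at x| = \sum_g incid g x.
Proof.
transitivity (\sum_(g in [set: gE G]) incid g x); last by apply: eq_bigl => g; rewrite inE.
by rewrite -card_matched_darts; apply: eq_card => d; rewrite !inE andbT.
Qed.

Lemma perfect_matchingE M :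
  perfect_matching M <-> forall x, \sum_(g in M) incid g x = 1.
Proof. by split=> pmM x; [rewrite -card_matched_darts | rewrite card_matched_darts]. Qed.

Lemma pm_dart_unique M x d1 d2 : perfect_matching M ->
  d1 \in darts_at x -> d2 \in darts_at x -> d1.1 \in M -> d2.1 \in M -> d1 = d2.
Proof.
move=> pmM d1x d2x d1M d2M; have /eqP/cards1P[d Ed] := pmM x.
have matched_d d' : d' \in darts_at x -> d'.1 \in M -> d' = d.
  by move=> d'x d'M; apply/set1P; rewrite -Ed inE d'x.
by rewrite (matched_d d1) // (matched_d d2).
Qed.

Lemma pm_dart_exists M x : perfect_matching M -> exists2 d, d \in darts_at x & d.1 \in M.
Proof.
move=> pmM; have /eqP/cards1P[d Ed] := pmM x.
by have := set11 d; rewrite -Ed inE => /andP[]; exists d.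
Qed.

Lemma pm_edge_noloop M g : perfect_matching M -> g \in M -> ends g false != ends g true.
Proof.
move=> /perfect_matchingE pmM gM; apply/eqP => loop_g.
by have := pmM (ends g false); rewrite (bigD1 g) //= /incid -loop_g eqxx.
Qed.

Lemma pm_cover_loopless k : pm_cover G k -> loopless.
Proof. by move=> [Ms [pmMs cov]] g; have [i gi] := cov g; exact: pm_edge_noloop gi. Qed.

Lemma odd_pm_cut M (S : {set gV G}) : perfect_matching M ->
  odd #|S| = odd (\sum_(g in M) ((ends g false \in S) != (ends g true \in S))).
Proof.
move=> /perfect_matchingE pmM.
have -> : #|S| = \sum_(g in M) ((ends g false \in S) + (ends g true \in S)).
  rewrite -sum1_card (eq_bigr _ (fun x _ => esym (pmM x))) exchange_big /=.
  by apply: eq_bigr => g _; rewrite big_split /= !sum_eq_in.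
have parity (a b : bool) : a + b = 2 * (a && b) + (a != b) by case: a; case: b.
under eq_bigr => g _ do rewrite parity.
by rewrite big_split /= -big_distrr /= oddD oddM.
Qed.

Lemma sum_incid_cover k (Ms : 'I_k -> {set gE G}) x :
  (forall i, perfect_matching (Ms i)) ->
  \sum_g incid g x * #|[set i | g \in Ms i]| = k.
Proof.
move=> pmMs; transitivity (\sum_(i < k) \sum_(g in Ms i) incid g x); last first.
  rewrite -[RHS]card_ord -sum1_card; apply: eq_bigr => i _.
  by have /perfect_matchingE -> := pmMs i.
under eq_bigr => g _ do rewrite -sum1dep_card big_distrr /= big_mkcond.
rewrite exchange_big; apply: eq_bigr => i _; rewrite [RHS]big_mkcond.
by apply: eq_bigr => g _; rewrite muln1.
Qed.

Section CubicVertex.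
Variables (k : nat) (Ms : 'I_k -> {set gE G}) (x : gV G).
Hypotheses (pmMs : forall i, perfect_matching (Ms i)) (cov : forall g, exists i, g \in Ms i).
Hypothesis deg3 : \sum_g incid g x = 3.

Let incid_le g : incid g x <= incid g x * #|[set i | g \in Ms i]|.
Proof. by rewrite leq_pmulr //; have [i gi] := cov g; apply/card_gt0P; exists i; rewrite inE. Qed.

Lemma pm_cover_deg3_ge3 : 3 <= k.
Proof. by rewrite -deg3 -(sum_incid_cover x pmMs); apply: leq_sum => g _; exact: incid_le. Qed.

Lemma pm_cover3_deg3_once (k3 : k = 3) g : 0 < incid g x -> #|[set i | g \in Ms i]| = 1.
Proof.
move=> incid_pos; apply/eqP; rewrite -(eqn_pmul2l incid_pos) muln1; apply/eqP.
apply: (@leq_sum_eq _ xpredT (incid^~ x) (fun g => incid g x * #|[set i | g \in Ms i]|))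
  => [g' _||//]; first exact: incid_le.
by rewrite deg3 sum_incid_cover // k3.
Qed.
End CubicVertex.

Section Dangling.
Variable w : gV G.

Lemma dangling_edge_inj (d1 d2 : Dang w) : (val d1).1 = (val d2).1 -> d1 = d2.
Proof.
case: d1 d2 => [[g b] Hb] [[g' b'] Hb'] /= eq_g; subst g'; apply: val_inj => /=.
congr pair; move: Hb Hb' => /andP[/eqP gb nb] /andP[/eqP gb' nb'].
by case: b b' gb nb gb' nb' => -[] //= gb nb gb' nb'; move: nb; rewrite ?gb ?gb' eqxx.
Qed.

Lemma pm_dart_dangling M d : perfect_matching M ->
  d \in darts_at w -> d.1 \in M -> dangling w d.
Proof.
move=> pmM; rewrite inE /dangling => /eqP dw dM; rewrite dw eqxx -dw /=.
by case: d {dw} dM => g [] /= /(pm_edge_noloop pmM); rewrite // eq_sym.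
Qed.

Lemma pm_dangling_unique M : perfect_matching M ->
  exists d0 : Dang w, forall d : Dang w, ((val d).1 \in M) = (d == d0).
Proof.
move=> pmM; have [d0 d0w d0M] := pm_dart_exists w pmM.
exists (exist _ d0 (pm_dart_dangling pmM d0w d0M)) => d.
apply/idP/eqP => [dM|-> //]; apply: val_inj => /=.
apply: (pm_dart_unique pmM _ d0w dM d0M).
by case: d {dM} => d /= /andP[]; rewrite inE.
Qed.

Lemma sum_dangling_far_end g x : x != w ->
  \sum_(b | dangling w (g, b)) (ends g (~~ b) == x) = if avoid w g then 0 else incid g x.
Proof.
move=> xw; rewrite big_mkcond big_bool /dangling /avoid /incid /=.
have wx : (w == x) = false by rewrite eq_sym (negbTE xw).
case: (eqVneq (ends g false) w) => [->|pw]; case: (eqVneq (ends g true) w) => [->|qw];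
  by rewrite /= ?wx ?addn0.
Qed.

Lemma sum_dangling_noloop g : ends g false != ends g true ->
  \sum_(b | dangling w (g, b)) 1 = incid g w.
Proof.
move=> nloop; rewrite big_mkcond big_bool /dangling /incid /=.
by case: (eqVneq (ends g false) w) nloop => [->|_]; case: (eqVneq (ends g true) w) => //= ->.
Qed.

Lemma sum_dangling_pairs (M : {set gE G}) (F : gE G * bool -> nat) :
  \sum_(g in M) \sum_(b | dangling w (g, b)) F (g, b) =
  \sum_(d : Dang w | (val d).1 \in M) F (val d).
Proof.
rewrite pair_big_dep (eq_big (fun p => (p.1 \in M) && dangling w p) F) => [|[] //|[] //].
exact: big_sig_cond.
Qed.

Lemma sum_incid_avoid (M : {set gE G}) x : x != w ->
  \sum_(g in M) incid g x =
  \sum_(y : {g | avoid w g} | val y \in M) incid (val y) x +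
  \sum_(d : Dang w | (val d).1 \in M) (ends (val d).1 (~~ (val d).2) == x).
Proof.
move=> xw; rewrite (bigID (avoid w)) /= big_sig_cond.
rewrite -(sum_dangling_pairs M (fun d => (ends d.1 (~~ d.2) == x) : nat)) big_mkcondr /=.
by congr (_ + _); apply: eq_bigr => g _; rewrite sum_dangling_far_end //; case: avoid.
Qed.

Lemma sum_incid_at (M : {set gE G}) : loopless ->
  \sum_(g in M) incid g w = #|[set d : Dang w | (val d).1 \in M]|.
Proof.
move=> noloop; rewrite -sum1dep_card -(sum_dangling_pairs M (fun _ => 1)).
by apply: eq_bigr => g _; rewrite sum_dangling_noloop.
Qed.

Lemma dangling_not_avoid (d : Dang w) : avoid w (val d).1 = false.
Proof. by case: d => -[g []] /= /andP[/eqP gw _]; rewrite /avoid gw eqxx ?andbF. Qed.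

Lemma not_avoid_dangling g : loopless -> ~~ avoid w g -> exists d : Dang w, (val d).1 = g.
Proof.
move=> noloop; rewrite negb_and !negbK => gw.
suff [b gbw] : exists b, dangling w (g, b) by exists (exist _ (g, b) gbw).
have := noloop g; case/orP: gw => /eqP gw; rewrite gw => nloop.
  by exists false; rewrite /dangling /= gw eqxx eq_sym.
by exists true; rewrite /dangling /= gw eqxx.
Qed.

Lemma odd_card_Vm : ~~ odd #|gV G| -> odd #|Vm w|.
Proof.
move=> evenG; have -> : #|Vm w| = #|gV G|.-1 by rewrite card_sig -(cardC1 w); apply: eq_card.
have : 0 < #|gV G| by apply/card_gt0P; exists w.
by case: #|gV G| evenG => // n; rewrite /= negbK.
Qed.

Lemma card_Dang : cubic G -> loopless -> #|Dang w| = 3.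
Proof.
move=> cubicG noloop; rewrite -(cubicG w) card_darts_at.
transitivity (\sum_(g in [set: gE G]) incid g w); last by apply: eq_bigl => g; rewrite inE.
by rewrite sum_incid_at // -cardsT; apply: eq_card => d; rewrite !inE.
Qed.

End Dangling.

End Matchings.

Section Colourings.
Variables (G : graph) (col : gE G -> 'I_3).
Implicit Types (x w : gV G) (g : gE G).

Definition proper_colouring : Prop :=
  forall d1 d2 : gE G * bool,
    d1 != d2 -> ends d1.1 d1.2 = ends d2.1 d2.2 -> col d1.1 != col d2.1.

Definition colour_class (c : 'I_3) : {set gE G} := [set g | col g == c].

Hypotheses (cubicG : cubic G) (col_proper : proper_colouring).

Lemma colour_inj_at x : {in darts_at x &, injective (fun d => col d.1)}.
Proof.
move=> d1 d2; rewrite !inE => /eqP d1x /eqP d2x eq_col; apply/eqP/negPn/negP => ne.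
by have := col_proper ne; rewrite d1x d2x eq_col eqxx => /(_ erefl).
Qed.

Lemma colour_at x c : exists2 d, d \in darts_at x & col d.1 = c.
Proof.
have : (fun d => col d.1) @: darts_at x = [set: 'I_3].
  apply/eqP; rewrite eqEcard subsetT card_in_imset ?cardsT ?card_ord ?cubicG //.
  exact: colour_inj_at.
by move/setP/(_ c); rewrite inE => /imsetP[d dx ->]; exists d.
Qed.

Lemma colour_class_pm c : perfect_matching (colour_class c).
Proof.
move=> x; have [d dx dc] := colour_at x c; apply/eqP/cards1P; exists d.
apply/setP => d'; rewrite in_set1 in_set [_ \in colour_class c]inE.
apply/andP/eqP => [[d'x /eqP cd']|->]; last by rewrite dx dc.
by apply: (colour_inj_at d'x dx); rewrite /= cd' dc.
Qed.

Lemma colourable_even : ~~ odd #|gV G|.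
Proof.
by rewrite -cardsT (odd_pm_cut _ (colour_class_pm ord0)) big1 // => g _; rewrite !inE.
Qed.

Lemma colour_dangling_inj w : injective (fun d : Dang w => col (val d).1).
Proof.
move=> d1 d2 eq_col; apply/val_inj/(colour_inj_at (x := w)) => //.
  by case: d1 {eq_col} => d /= /andP[]; rewrite inE.
by case: d2 {eq_col} => d /= /andP[]; rewrite inE.
Qed.
End Colourings.

Lemma edge_cover_colouring (G : graph) k (Ms : 'I_k -> {set gE G}) (e : gE G) (c0 : 'I_3) :
  cubic G -> (forall i, perfect_matching (Ms i)) -> (forall g, exists i, g \in Ms i) ->
  exists c : 'I_k -> 'I_3,
    (forall i, (c i == c0) = (e \in Ms i)) /\ (forall c', exists i, c i = c').
Proof.
move=> cubicG pmMs cov; set a := ends e false.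
have ea : (e, false) \in darts_at a by rewrite inE.
have /cards2P[d1 [d2 [d12 Ed]]] : #|darts_at a :\ (e, false)| == 2.
  by have := cardsD1 (e, false) (darts_at a); rewrite ea cubicG add1n => -[<-].
have other_darts d : d \in [set d1; d2] -> d \in darts_at a /\ d != (e, false).
  by rewrite -Ed !inE => /andP[].
have [d1a d1e] := other_darts d1 (set21 _ _); have [d2a d2e] := other_darts d2 (set22 _ _).
have unmatched i d d' : d \in darts_at a -> d' \in darts_at a -> d != d' ->
    d.1 \in Ms i -> d'.1 \notin Ms i.
  move=> da d'a /eqP dd' dM; apply/negP => d'M.
  exact: dd' (pm_dart_unique (pmMs i) da d'a dM d'M).
have [c1 [c2 [c10 c20 c_all]]] := ord3_others c0.
(* a matching avoiding e contains exactly one of d1, d2, which selects c1 or c2 *)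
exists (fun i => if e \in Ms i then c0 else if d1.1 \in Ms i then c1 else c2); split => [i|c].
  by case: (e \in Ms i); rewrite ?eqxx //; case: ifP => _; apply: negbTE.
case/or3P: (c_all c) => /eqP ->.
- by have [i ei] := cov e; exists i; rewrite ei.
- have [i d1i] := cov d1.1; exists i.
  by rewrite (negbTE (unmatched i _ _ d1a ea d1e d1i)) d1i.
- have [i d2i] := cov d2.1; exists i.
  rewrite (negbTE (unmatched i _ _ d2a ea d2e d2i)).
  by rewrite (negbTE (unmatched i _ _ d2a d1a _ d2i)) // eq_sym.
Qed.

Section TwoSumMatchings.
Variables (H K : graph) (e : gE H) (f : gE K) (s : bool).
Local Notation G := (sum2 e f s).

Lemma sum2_incid_inl (M' : {set gE G}) (M : {set gE H}) x :
  (forall y, (inl (inl y) \in M') = (val y \in M)) -> (forall c, (inr c \in M') = (e \in M)) ->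
  \sum_(g in M') incid g (inl x) = \sum_(g in M) incid g x.
Proof.
move=> M'H M'e; rewrite big_sumType big_sumType /=.
rewrite [RHS]big_mkcond (bigD1 e) //= big_sig.
rewrite [X in _ + X + _]big1 ?addn0 => [|z _]; last by rewrite /incid.
rewrite addnC big_mkcond big_bool !M'e; congr (_ + _).
  by rewrite /incid /= !(inj_eq inl_inj); case: (e \in M); rewrite // !addn0 addnC.
by rewrite big_mkcond; apply: eq_bigr => y _; rewrite M'H.
Qed.

Lemma sum2_incid_inr (M' : {set gE G}) (N : {set gE K}) y :
  (forall z, (inl (inr z) \in M') = (val z \in N)) -> (forall c, (inr c \in M') = (f \in N)) ->
  \sum_(g in M') incid g (inr y) = \sum_(g in N) incid g y.
Proof.
move=> M'K M'f; rewrite big_sumType big_sumType /=.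
rewrite [RHS]big_mkcond (bigD1 f) //= big_sig.
rewrite [X in X + _ + _]big1 ?add0n => [|z _]; last by rewrite /incid.
rewrite addnC big_mkcond big_bool !M'f; congr (_ + _).
  by rewrite /incid /= !(inj_eq inr_inj); case: (f \in N); case: s; rewrite //= addnC.
by rewrite big_mkcond; apply: eq_bigr => z _; rewrite M'K.
Qed.

Lemma sum2_cut_parity (M' : {set gE G}) : perfect_matching M' ->
  odd #|gV K| = (inr false \in M') (+) (inr true \in M').
Proof.
move=> pmM'; rewrite -(card_right_vertices (gV H)) (odd_pm_cut _ pmM') big_sumType big_sumType /=.
rewrite [X in X + _ + _]big1 => [|y _]; last by rewrite !inE.
rewrite [X in _ + X + _]big1 => [|z _]; last by rewrite !inE.
by rewrite big_mkcond big_bool /= !inE oddD; case: (_ \in M'); case: (_ \in M').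
Qed.

Definition lift2 (M : {set gE H}) (N : {set gE K}) : {set gE G} :=
  [set g : gE G | match g with
                  | inl (inl y) => val y \in M
                  | inl (inr z) => val z \in N
                  | inr _ => e \in M
                  end].

Lemma lift2_pm (M : {set gE H}) (N : {set gE K}) :
  perfect_matching M -> perfect_matching N -> (e \in M) = (f \in N) ->
  perfect_matching (lift2 M N).
Proof.
move=> /perfect_matchingE pmM /perfect_matchingE pmN ef; apply/perfect_matchingE => -[x|y].
  by rewrite (@sum2_incid_inl _ M) // => [y|c]; rewrite inE.
by rewrite (@sum2_incid_inr _ N) // => [z|c]; rewrite inE ?ef.
Qed.

Definition restr2 (M' : {set gE G}) : {set gE H} :=
  [set g | if insub g is Some y then inl (inl y) \in M' else inr false \in M'].

Lemma restr2_pm (M' : {set gE G}) :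
  ~~ odd #|gV K| -> perfect_matching M' -> perfect_matching (restr2 M').
Proof.
move=> evenK pmM'; have := sum2_cut_parity pmM'; rewrite (negbTE evenK) => cut.
have /perfect_matchingE pm' := pmM'; apply/perfect_matchingE => x; rewrite -(pm' (inl x)).
apply/esym/sum2_incid_inl => [y|[]]; rewrite inE ?valK // insubF ?eqxx //.
by case: (inr true \in M') cut; case: (inr false \in M').
Qed.

Lemma pm_cover_sum2_restr k : ~~ odd #|gV K| -> pm_cover G k -> pm_cover H k.
Proof.
move=> evenK [Ms [pmMs cov]]; exists (restr2 \o Ms); split => [i|g]; first exact: restr2_pm.
have [i gi] := cov (if insub g is Some y then inl (inl y) else inr false : gE G).
by exists i; rewrite inE; case: insub gi.
Qed.

Lemma pm_cover_sum2 k (col : gE K -> 'I_3) : cubic H -> cubic K -> proper_colouring col ->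
  pm_cover H k -> pm_cover G k.
Proof.
move=> cubicH cubicK col_proper [Ms [pmMs cov]].
have [c [c_e c_onto]] := edge_cover_colouring e (col f) cubicH pmMs cov.
exists (fun i => lift2 (Ms i) (colour_class col (c i))); split => [i|].
  by apply: lift2_pm (pmMs i) (colour_class_pm cubicK col_proper _) _; rewrite inE eq_sym c_e.
move=> [[y|z]|b].
- by have [i yi] := cov (val y); exists i; rewrite inE.
- by have [i ci] := c_onto (col (val z)); exists i; rewrite !inE ci.
- by have [i ei] := cov e; exists i; rewrite inE.
Qed.
End TwoSumMatchings.

Section ThreeSumMatchings.
Variables (H K : graph) (u : gV H) (v : gV K) (phi : Dang u -> Dang v).
Hypothesis phi_bij : bijective phi.
Local Notation G := (sum3 phi).

Lemma sum3_incid_inl (M' : {set gE G}) (M : {set gE H}) (x : Vm u) :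
  (forall y, (inl (inl y) \in M') = (val y \in M)) ->
  (forall d : Dang u, (inr d \in M') = ((val d).1 \in M)) ->
  \sum_(g in M') incid g (inl x) = \sum_(g in M) incid g (val x).
Proof.
move=> M'H M'D; rewrite big_sumType big_sumType /= (sum_incid_avoid M (valP x)).
rewrite [X in _ + X + _]big1 ?addn0 => [|z _]; last by rewrite /incid.
by congr (_ + _); apply: eq_big => [g|g _]; rewrite ?M'H ?M'D // /incid /= addn0.
Qed.

Lemma sum3_incid_inr (M' : {set gE G}) (N : {set gE K}) (x : Vm v) :
  (forall z, (inl (inr z) \in M') = (val z \in N)) ->
  (forall d : Dang u, (inr d \in M') = ((val (phi d)).1 \in N)) ->
  \sum_(g in M') incid g (inr x) = \sum_(g in N) incid g (val x).
Proof.
move=> M'K M'D; rewrite big_sumType big_sumType /= (sum_incid_avoid N (valP x)).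
rewrite [X in X + _ + _]big1 ?add0n => [|y _]; last by rewrite /incid.
rewrite [X in _ = _ + X](reindex phi) /=; last exact: onW_bij.
by congr (_ + _); apply: eq_big => [g|g _]; rewrite ?M'K ?M'D.
Qed.

Lemma sum3_deg_inl (x : Vm u) : cubic H -> \sum_g incid g (inl x : gV G) = 3.
Proof.
move=> cubicH; rewrite -(cubicH (val x)) card_darts_at.
transitivity (\sum_(g in [set: gE G]) incid g (inl x)); first by apply: eq_bigl => g; rewrite inE.
transitivity (\sum_(g in [set: gE H]) incid g (val x)); last by apply: eq_bigl => g; rewrite inE.
by apply: sum3_incid_inl => *; rewrite !inE.
Qed.

Lemma sum3_cut_parity (M' : {set gE G}) : perfect_matching M' ->
  odd #|Vm v| = odd #|[set d : Dang u | inr d \in M']|.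
Proof.
move=> pmM'; rewrite -(card_right_vertices (Vm u)) (odd_pm_cut _ pmM') big_sumType big_sumType /=.
rewrite [X in X + _ + _]big1 => [|y _]; last by rewrite !inE.
rewrite [X in _ + X + _]big1 => [|z _]; last by rewrite !inE.
by rewrite -sum1dep_card; congr odd; apply: eq_bigr => d _; rewrite !inE.
Qed.

Definition lift3 (M : {set gE H}) (N : {set gE K}) : {set gE G} :=
  [set g : gE G | match g with
                  | inl (inl y) => val y \in M
                  | inl (inr z) => val z \in N
                  | inr d => (val d).1 \in M
                  end].

Lemma lift3_pm (M : {set gE H}) (N : {set gE K}) :
  perfect_matching M -> perfect_matching N ->
  (forall d, ((val d).1 \in M) = ((val (phi d)).1 \in N)) -> perfect_matching (lift3 M N).
Proof.
move=> /perfect_matchingE pmM /perfect_matchingE pmN MN; apply/perfect_matchingE => -[x|x].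
  by rewrite (@sum3_incid_inl _ M) // => [y|d]; rewrite inE.
by rewrite (@sum3_incid_inr _ N) // => [z|d]; rewrite inE ?MN.
Qed.

Definition restr3 (M' : {set gE G}) : {set gE H} :=
  [set g | if insub g is Some y then inl (inl y) \in M'
           else [exists d : Dang u, ((val d).1 == g) && (inr d \in M')]].

Lemma restr3_dangling (M' : {set gE G}) (d : Dang u) :
  ((val d).1 \in restr3 M') = (inr d \in M').
Proof.
rewrite inE insubF ?dangling_not_avoid //; apply/existsP/idP => [[d' /andP[/eqP]]|dM].
  by move/dangling_edge_inj ->.
by exists d; rewrite eqxx.
Qed.

Lemma restr3_pm (M' : {set gE G}) : loopless H -> perfect_matching M' ->
  #|[set d : Dang u | inr d \in M']| = 1 -> perfect_matching (restr3 M').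
Proof.
move=> noloopH /perfect_matchingE pmM' one_new; apply/perfect_matchingE => x.
case: (eqVneq x u) => [->|xu].
  by rewrite sum_incid_at // -one_new; apply: eq_card => d; rewrite inE restr3_dangling inE.
rewrite -(pmM' (inl (exist _ x xu))) (@sum3_incid_inl _ (restr3 M')) // => [y|d].
  by rewrite inE valK.
by rewrite restr3_dangling.
Qed.

Lemma sum3_pm_cover_ge3 k : cubic H -> loopless H -> pm_cover G k -> 3 <= k.
Proof.
move=> cubicH noloopH [Ms [pmMs cov]].
have /card_gt0P[d0 _] : 0 < #|Dang u| by rewrite card_Dang.
exact: pm_cover_deg3_ge3 pmMs cov (sum3_deg_inl (far_end d0) cubicH).
Qed.

Lemma pm_cover_sum3_restr : cubic H -> loopless H -> ~~ odd #|gV K| ->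
  pm_cover G 3 -> pm_cover H 3.
Proof.
move=> cubicH noloopH evenK [Ms [pmMs cov]].
pose new i := #|[set d : Dang u | inr d \in Ms i]|.
have new_once d : #|[set i | inr d \in Ms i]| = 1.
  apply: (pm_cover3_deg3_once pmMs cov (sum3_deg_inl (far_end d) cubicH)) => //.
  by rewrite /incid /= eqxx.
have new_pos i : 0 < new i.
  by have := sum3_cut_parity (pmMs i); rewrite odd_card_Vm // /new; case: #|_|.
have new_total : \sum_i new i = 3.
  transitivity (\sum_(d : Dang u) #|[set i | inr d \in Ms i]|).
    rewrite /new; under eq_bigr => i _ do rewrite -sum1dep_card big_mkcond.
    by rewrite exchange_big; apply: eq_bigr => d _; rewrite -sum1dep_card [RHS]big_mkcond.
  by under eq_bigr => d _ do rewrite new_once; rewrite sum1_card card_Dang.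
have new_one i : new i = 1.
  apply: (@leq_sum_eq _ xpredT (fun=> 1) new) => [j _||//]; first exact: new_pos.
  by rewrite new_total sum1_card card_ord.
exists (restr3 \o Ms); split => [i|g]; first exact: restr3_pm noloopH (pmMs i) (new_one i).
case Eg: (insub g : option {g | avoid u g}) => [y|].
  by have [i yi] := cov (inl (inl y)); exists i; rewrite inE Eg.
have /(not_avoid_dangling noloopH)[d <-] : ~~ avoid u g.
  by apply/negP => avoid_g; rewrite (insubT (avoid u) avoid_g) in Eg.
by have [i di] := cov (inr d); exists i; rewrite /= restr3_dangling.
Qed.

Lemma pm_cover_sum3 k (col : gE K -> 'I_3) : cubic K -> proper_colouring col ->
  pm_cover H k -> pm_cover G k.
Proof.
move=> cubicK col_proper [Ms [pmMs cov]].
have [dM dMP] := fin_all_exists (fun i => pm_dangling_unique u (pmMs i)).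
have phi_col_inj : injective ((fun d' : Dang v => col (val d').1) \o phi).
  exact: inj_comp (@colour_dangling_inj _ _ col_proper v) (bij_inj phi_bij).
pose c i := col (val (phi (dM i))).1.
exists (fun i => lift3 (Ms i) (colour_class col (c i))); split => [i|].
  apply: lift3_pm (pmMs i) (colour_class_pm cubicK col_proper _) _ => d.
  by rewrite dMP inE (inj_eq phi_col_inj).
move=> [[y|z]|d].
- by have [i yi] := cov (val y); exists i; rewrite inE.
- have [dz dzv dz_col] := colour_at cubicK col_proper v (col (val z)).
  have dz_dang : dangling v dz.
    apply: pm_dart_dangling (colour_class_pm cubicK col_proper (col (val z))) dzv _.
    by rewrite inE dz_col.
  have [psi phiK psiK] := phi_bij; set d := psi (exist _ dz dz_dang).
  have [i di] := cov (val d).1; have /eqP d_i : d == dM i by rewrite -dMP.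
  by exists i; rewrite !inE /c -d_i psiK dz_col.
- by have [i di] := cov (val d).1; exists i; rewrite inE.
Qed.
End ThreeSumMatchings.

Theorem lemma5p1 (H K : graph) :
  two_connected H -> cubic H -> two_connected K -> cubic K ->
  pm_index H 4 -> three_edge_colourable K ->
  (forall (e : gE H) (f : gE K) (s : bool), pm_index (sum2 e f s) 4) /\
  (forall (u : gV H) (v : gV K) (phi : Dang u -> Dang v),
      bijective phi -> pm_index (sum3 phi) 4).
Proof.
move=> _ cubicH _ cubicK [coverH4 minH] [col col_proper].
have evenK := colourable_even cubicK col_proper.
have noloopH := pm_cover_loopless coverH4.
split=> [e f s | u v phi phi_bij]; split.
- exact: pm_cover_sum2 cubicH cubicK col_proper coverH4.
- by move=> m lt_m4 /(pm_cover_sum2_restr evenK); apply: minH.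
- exact: (pm_cover_sum3 phi_bij cubicK col_proper coverH4).
- move=> m lt_m4 coverG; apply: (minH 3 isT).
  have ge3_m := sum3_pm_cover_ge3 cubicH noloopH coverG.
  have m3 : m = 3 by apply/eqP; rewrite eqn_leq -ltnS lt_m4 ge3_m.
  by move: coverG; rewrite m3; apply: pm_cover_sum3_restr.
Qed.
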